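(* In the UDoG template described in the context, let $c>0$ and $t\ge0$. If $\eta_{x,t}\le\frac{\bar r_t}{c\,\alpha_t\|m_t\|}$, $\eta_{y,t}\le\frac{\bar r_t}{c\,\alpha_t\|g_t-m_t\|}$ and $\eta_{y,t}\le\eta_{x,t}$, then \[ \|x_{t+1}-y_t\|\le\frac{\bar r_t}{c},\quad\|y_{t+1}-y_t\|\le\frac{2\bar r_t}{c},\quad\|x_{t+1}-y_{t+1}\|\le\frac{2\bar r_t}{c},\quad\bar r_{t+1}\le\bar r_t\left(1+\frac2c\right). \]
   Context: Norms are Euclidean, $\Pi_{\mathcal K}$ is Euclidean projection onto a closed convex set $\mathcal K\subseteq\mathbb R^n$; $\mathcal O$ is a stochastic gradient oracle for a function on $\mathcal K$. UDoG template: given $x_0\in\mathcal K$, $r_\epsilon>0$, set $y_0=x_0$; for $t=0,1,\dots$: $\bar r_t=\max_{k\le t}\max\{\|y_k-x_0\|,\|x_k-x_0\|,r_\epsilon\}$, $\alpha_t=\sum_{k=0}^t\bar r_k/\bar r_t$, $w_t=\alpha_t\bar r_t$; $\bar z_t=\frac{w_ty_t+\sum_{k=0}^{t-1}w_kx_{k+1}}{\sum_{k=0}^tw_k}$, $m_t\sim\mathcal O(\bar z_t)$, $x_{t+1}=\Pi_{\mathcal K}(y_t-\alpha_t\eta_{x,t}m_t)$; $\bar x_t=\frac{\sum_{k=0}^tw_kx_{k+1}}{\sum_{k=0}^tw_k}$, $g_t\sim\mathcal O(\bar x_t)$, $y_{t+1}=\Pi_{\mathcal K}(y_t-\alpha_t\eta_{y,t}g_t)$,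 with positive step sizes $\eta_{x,t},\eta_{y,t}$. *)

From HB Require Import structures.
From mathcomp Require Import all_boot all_order all_algebra.
From mathcomp Require Import all_classical all_reals all_analysis.
Set Implicit Arguments. Unset Strict Implicit. Unset Printing Implicit Defensive.
Import Order.TTheory GRing.Theory Num.Theory.
Import numFieldNormedType.Exports.
Local Open Scope ring_scope.
Local Open Scope classical_set_scope.

Section UDoG.
Variables (R : realType) (n : nat).
Notation vec := 'rV[R]_n.

Definition enorm (v : vec) : R := Num.sqrt (\sum_(i < n) (v ord0 i) ^+ 2).

Definition convex_set (K : set vec) : Prop :=
  forall u v : vec, K u -> K v -> forall l : R, 0 <= l -> l <= 1 ->
    K (l *: u + (1 - l) *: v).

Definition is_euclid_proj (K : set vec) (proj : vec -> vec) : Prop :=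
  forall v : vec, K (proj v) /\ forall q : vec, K q -> enorm (v - proj v) <= enorm (v - q).

Definition rbar (x0 : vec) (reps : R) (x y : nat -> vec) (t : nat) : R :=
  \big[Num.max/0]_(k < t.+1)
     Num.max (Num.max (enorm (y k - x0)) (enorm (x k - x0))) reps.

Definition alpha (x0 : vec) (reps : R) (x y : nat -> vec) (t : nat) : R :=
  (\sum_(k < t.+1) rbar x0 reps x y k) / rbar x0 reps x y t.

Definition weight (x0 : vec) (reps : R) (x y : nat -> vec) (t : nat) : R :=
  alpha x0 reps x y t * rbar x0 reps x y t.

Definition zbar (x0 : vec) (reps : R) (x y : nat -> vec) (t : nat) : vec :=
  (\sum_(k < t.+1) weight x0 reps x y k)^-1 *:
  (weight x0 reps x y t *: y t
     + \sum_(k < t) weight x0 reps x y k *: x k.+1).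

Definition xbar (x0 : vec) (reps : R) (x y : nat -> vec) (t : nat) : vec :=
  (\sum_(k < t.+1) weight x0 reps x y k)^-1 *:
  (\sum_(k < t.+1) weight x0 reps x y k *: x k.+1).

(* A run of the UDoG template: the oracle O is modelled by the relation
   O p s = "s is a possible output of the stochastic gradient oracle queried at p";
   m t, g t are the realized oracle outputs. *)
Definition udog_run (K : set vec) (proj : vec -> vec) (O : vec -> vec -> Prop)
  (x0 : vec) (reps : R) (etax etay : nat -> R)
  (x y m g : nat -> vec) : Prop :=
  x 0 = x0 /\ y 0 = x0 /\
  (forall t, O (zbar x0 reps x y t) (m t)) /\
  (forall t, x t.+1 = proj (y t - (alpha x0 reps x y t * etax t) *: m t)) /\
  (forall t, O (xbar x0 reps x y t) (g t)) /\
  (forall t, y t.+1 = proj (y t - (alpha x0 reps x y t * etay t) *: g t)).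

End UDoG.

From HB Require Import structures.
From mathcomp Require Import all_boot all_order all_algebra.
From mathcomp Require Import all_classical all_reals all_analysis.
From mathcomp Require Import ring lra.
Import Order.TTheory GRing.Theory Num.Theory.
Import numFieldNormedType.Exports.
Local Open Scope ring_scope.
Local Open Scope classical_set_scope.
Set Implicit Arguments. Unset Strict Implicit.

(* Both x_(t+1) and y_(t+1) are Euclidean projections onto K of short steps
   from y_t, which lies in K. The projection fixes K and is nonexpansive (both
   follow from the obtuse-angle inequality <v - proj v, q - proj v> <= 0 for
   q in K), so
     |x_(t+1) - y_t| <= a_x |m_t| <= rbar_t / c,
     |y_(t+1) - y_t| <= a_y (|g_t - m_t| + |m_t|) <= 2 rbar_t / c,
     |x_(t+1) - y_(t+1)| <= |a_y (g_t - m_t) - (a_x - a_y) m_t| <= 2 rbar_t / c,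
   where a_x = alpha_t eta_(x,t) >= a_y = alpha_t eta_(y,t). The triangle
   inequality through y_t then bounds the distances of x_(t+1) and y_(t+1)
   to x_0, hence rbar_(t+1), by rbar_t + 2 rbar_t / c. *)

Lemma le0_of_le_scaled (R : realFieldType) (C W : R) :
  0 <= W -> (forall l, 0 < l -> l <= 1 -> C <= l * W) -> C <= 0.
Proof.
move=> W0 le_CW; rewrite leNgt; apply/negP => C0.
have WC0 : 0 < W + C by rewrite ltr_wpDl.
set l := C / (W + C).
have l0 : 0 < l by rewrite divr_gt0.
have l1 : l <= 1 by rewrite ler_pdivrMr // mul1r lerDr.
have lWC : l * (W + C) = C by rewrite divfK ?gt_eqF.
have := le_CW l l0 l1; nra.
Qed.

Section EuclideanGeometry.
Variables (R : realType) (n : nat).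
Implicit Types (u v w : 'rV[R]_n).

Definition dot u v : R := \sum_(i < n) u ord0 i * v ord0 i.

Lemma dotC u v : dot u v = dot v u.
Proof. by apply: eq_bigr => i _; rewrite mulrC. Qed.

Lemma dotDl u v w : dot (u + v) w = dot u w + dot v w.
Proof. by rewrite /dot -big_split; apply: eq_bigr => i _; rewrite mxE mulrDl. Qed.

Lemma dotZl (a : R) u w : dot (a *: u) w = a * dot u w.
Proof. by rewrite /dot mulr_sumr; apply: eq_bigr => i _; rewrite mxE mulrA. Qed.

Lemma dotNl u w : dot (- u) w = - dot u w.
Proof. by rewrite -scaleN1r dotZl mulN1r. Qed.

Lemma dotBl u v w : dot (u - v) w = dot u w - dot v w.
Proof. by rewrite dotDl dotNl. Qed.

Lemma dotBr u v w : dot w (u - v) = dot w u - dot w v.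
Proof. by rewrite dotC dotBl !(dotC w). Qed.

Lemma dotZr (a : R) u w : dot w (a *: u) = a * dot w u.
Proof. by rewrite dotC dotZl dotC. Qed.

Lemma dot_ge0 u : 0 <= dot u u.
Proof. by apply: sumr_ge0 => i _; rewrite -expr2 sqr_ge0. Qed.

Lemma dot_self_eq0 u : dot u u = 0 -> u = 0.
Proof.
move/eqP; rewrite psumr_eq0 => [/allP u0|i _]; last by rewrite -expr2 sqr_ge0.
apply/rowP => i; rewrite mxE; apply/eqP.
by rewrite -sqrf_eq0 expr2; exact: u0 (mem_index_enum i).
Qed.

Lemma enormE u : enorm u = Num.sqrt (dot u u).
Proof. by congr Num.sqrt; apply: eq_bigr => i _; rewrite expr2. Qed.

Lemma enorm_sqr u : enorm u ^+ 2 = dot u u.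
Proof. by rewrite enormE sqr_sqrtr ?dot_ge0. Qed.

Lemma enorm_ge0 u : 0 <= enorm u.
Proof. exact: sqrtr_ge0. Qed.

Lemma enorm0 : enorm (0 : 'rV[R]_n) = 0.
Proof. by rewrite /enorm big1 ?sqrtr0 // => i _; rewrite mxE expr0n. Qed.

Lemma enormZ (a : R) u : enorm (a *: u) = `|a| * enorm u.
Proof.
by rewrite !enormE dotZl dotZr mulrA -expr2 sqrtrM ?sqr_ge0 // sqrtr_sqr.
Qed.

Lemma dot_le_enorm u v : dot u v <= enorm u * enorm v.
Proof.
have [->|u0] := eqVneq u 0.
  by rewrite -(scale0r 0) dotZl mul0r mulr_ge0 ?enorm_ge0.
have d0 : 0 < dot u u.
  by rewrite lt_def dot_ge0 andbT; apply: contra u0 => /eqP/dot_self_eq0 ->.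
have key : dot u v ^+ 2 <= dot u u * dot v v.
  have := dot_ge0 (dot u v *: u - dot u u *: v).
  rewrite !(dotBl, dotBr, dotZl, dotZr) (dotC v u); nra.
apply: le_trans (ler_norm _) _.
by rewrite -ler_sqr ?nnegrE ?mulr_ge0 ?enorm_ge0 // real_normK ?num_real // exprMn !enorm_sqr.
Qed.

Lemma enormD u v : enorm (u + v) <= enorm u + enorm v.
Proof.
rewrite -ler_sqr ?nnegrE ?addr_ge0 ?enorm_ge0 // sqrrD !enorm_sqr.
rewrite !(dotDl, dotC _ (u + v)) (dotC v u).
have := dot_le_enorm u v; lra.
Qed.

Lemma enormN u : enorm (- u) = enorm u.
Proof. by rewrite -scaleN1r enormZ normrN1 mul1r. Qed.

Lemma enormB u v : enorm (u - v) <= enorm u + enorm v.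
Proof. by rewrite -(enormN v) enormD. Qed.

Lemma enorm_triangle u v w : enorm (u - w) <= enorm (u - v) + enorm (v - w).
Proof. by rewrite -[u - w](subrKA v) enormD. Qed.

Lemma enorm_le_of_dot u w : enorm w ^+ 2 <= dot u w -> enorm w <= enorm u.
Proof.
rewrite enorm_sqr => le_ww_uw.
rewrite -ler_sqr ?nnegrE ?enorm_ge0 // !enorm_sqr.
have := dot_ge0 (u - w); rewrite !(dotBl, dotBr) (dotC w u); lra.
Qed.

Variables (K : set 'rV[R]_n) (proj : 'rV[R]_n -> 'rV[R]_n).
Hypotheses (convK : convex_set K) (projK : is_euclid_proj K proj).

Lemma proj_mem v : K (proj v).
Proof. by have [] := projK v. Qed.

Lemma proj_obtuse v q : K q -> dot (v - proj v) (q - proj v) <= 0.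
Proof.
move=> Kq; set p := proj v.
(* p is closer to v than every point p + l (q - p) of the segment [p, q];
   letting l -> 0 gives the first-order condition. *)
have le_dist l : 0 < l -> l <= 1 -> enorm (v - p) <= enorm (v - p - l *: (q - p)).
  move=> l0 l1.
  (* the [conv] of [convex_set] unfolds to this convex combination *)
  have Kl : K (l *: q + (1 - l) *: p) :=
    set_mem (convK (Itv01 (ltW l0) l1) (mem_set Kq) (mem_set (proj_mem v))).
  have -> : v - p - l *: (q - p) = v - (l *: q + (1 - l) *: p).
    by apply/rowP => i; rewrite !mxE; ring.
  exact: (proj2 (projK v)).
move: le_dist; set d := v - p; set w := q - p; clearbody d w => le_dist.
suff : 2 * dot d w <= 0 by lra.
apply: (le0_of_le_scaled (dot_ge0 w)) => l l0 l1.
have := le_dist l l0 l1.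
rewrite -ler_sqr ?nnegrE ?enorm_ge0 // !enorm_sqr dotBl !dotBr !dotZl !dotZr.
rewrite (dotC w d) => h; rewrite -(ler_pM2l l0); nra.
Qed.

Lemma proj_id v : K v -> proj v = v.
Proof.
move=> Kv; apply/esym/subr0_eq/dot_self_eq0/eqP.
have := proj2 (projK v) _ Kv; rewrite subrr enorm0 => le_0.
have : enorm (v - proj v) == 0 by rewrite eq_le le_0 enorm_ge0.
by rewrite -sqrf_eq0 enorm_sqr.
Qed.

Lemma proj_nonexpansive u v : enorm (proj u - proj v) <= enorm (u - v).
Proof.
apply: enorm_le_of_dot; rewrite enorm_sqr.
have hu := proj_obtuse u (proj_mem v); have hv := proj_obtuse v (proj_mem u).
move: hu hv; rewrite !(dotBl, dotBr) (dotC (proj v) (proj u)); lra.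
Qed.

Lemma proj_dist_le u v : K v -> enorm (proj u - v) <= enorm (u - v).
Proof. by move=> Kv; rewrite -{1}(proj_id Kv); exact: proj_nonexpansive. Qed.

Lemma proj_step_le z v : K z -> enorm (proj (z - v) - z) <= enorm v.
Proof.
by move=> Kz; apply: le_trans (proj_dist_le _ Kz) _; rewrite addrAC subrr add0r enormN.
Qed.

Section ExtragradientStep.
Variables (z m g : 'rV[R]_n) (a b rho : R).
Hypotheses (Kz : K z) (b_ge0 : 0 <= b) (le_ba : b <= a).
Hypotheses (am_le : a * enorm m <= rho) (bgm_le : b * enorm (g - m) <= rho).

Lemma extra_step_le : enorm (proj (z - a *: m) - z) <= rho.
Proof.
apply: le_trans (proj_step_le _ Kz) _.
by rewrite enormZ ger0_norm // (le_trans b_ge0).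
Qed.

Lemma update_step_le : enorm (proj (z - b *: g) - z) <= 2 * rho.
Proof.
apply: le_trans (proj_step_le _ Kz) _; rewrite enormZ ger0_norm //.
have := ler_wpM2l b_ge0 (enormD (g - m) m); rewrite subrK mulrDr => le_bg.
apply: (le_trans le_bg); rewrite mulr_natl mulr2n lerD // (le_trans _ am_le) //.
by rewrite ler_wpM2r ?enorm_ge0.
Qed.

Lemma extra_update_gap_le :
  enorm (proj (z - a *: m) - proj (z - b *: g)) <= 2 * rho.
Proof.
apply: le_trans (proj_nonexpansive _ _) _.
have -> : z - a *: m - (z - b *: g) = b *: (g - m) - (a - b) *: m.
  by apply/rowP => i; rewrite !mxE; ring.
apply: le_trans (enormB _ _) _.
rewrite !enormZ !ger0_norm ?subr_ge0 // mulr_natl mulr2n lerD //.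
by rewrite mulrBl (le_trans _ am_le) // gerBl mulr_ge0 ?enorm_ge0.
Qed.

End ExtragradientStep.

End EuclideanGeometry.

Section UDoGRadius.
Variables (R : realType) (n : nat) (x0 : 'rV[R]_n) (reps : R).
Variables (x y : nat -> 'rV[R]_n).

Definition rbar_term k := Num.max (Num.max (enorm (y k - x0)) (enorm (x k - x0))) reps.

Local Notation rbar := (rbar x0 reps x y).

Lemma rbar_term_le_rbar t : rbar_term t <= rbar t.
Proof. exact: (le_bigmax _ (fun k : 'I_t.+1 => rbar_term k) ord_max). Qed.

Lemma dist_y_le_rbar t : enorm (y t - x0) <= rbar t.
Proof. by apply: le_trans (rbar_term_le_rbar t); rewrite !le_max lexx. Qed.

Lemma rbar_gt0 t : 0 < reps -> 0 < rbar t.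
Proof.
move=> reps_gt0; apply: lt_le_trans (rbar_term_le_rbar t).
by rewrite lt_max reps_gt0 orbT.
Qed.

Lemma alpha_ge0 t : 0 < reps -> 0 <= alpha x0 reps x y t.
Proof.
move=> reps_gt0; apply: divr_ge0; last exact/ltW/rbar_gt0.
by apply: sumr_ge0 => k _; exact/ltW/rbar_gt0.
Qed.

Lemma rbarS_le (B : R) t : rbar t <= B ->
  enorm (y t.+1 - x0) <= B -> enorm (x t.+1 - x0) <= B -> rbar t.+1 <= B.
Proof.
move=> /bigmax_leP[B_ge0 le_rbar] le_y le_x; apply/bigmax_leP; split=> // k _.
have [lt_kt|le_tk] := ltnP k t.+1; first exact: (le_rbar (Ordinal lt_kt)).
have -> : nat_of_ord k = t.+1 by apply/eqP; rewrite eqn_leq le_tk -ltnS ltn_ord.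
rewrite /rbar_term !ge_max le_y le_x /=.
by have := le_rbar ord_max isT; rewrite /rbar_term !ge_max => /andP[].
Qed.

Lemma rbarS_le_step t (rho : R) : 0 <= rho ->
  enorm (x t.+1 - y t) <= rho -> enorm (y t.+1 - y t) <= 2 * rho ->
  rbar t.+1 <= rbar t + 2 * rho.
Proof.
move=> rho_ge0 le_x le_y.
have le_rho2 : rho <= 2 * rho by rewrite mulr_natl mulr2n lerDl.
apply: rbarS_le; first by rewrite lerDl (le_trans rho_ge0).
- apply: le_trans (enorm_triangle _ (y t) _) _.
  by rewrite addrC lerD ?dist_y_le_rbar.
- apply: le_trans (enorm_triangle _ (y t) _) _.
  by rewrite addrC lerD ?dist_y_le_rbar ?(le_trans le_x).
Qed.

End UDoGRadius.

Lemma udog_run_mem_y (R : realType) (n : nat) (K : set 'rV[R]_n) proj O x0 reps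
    etax etay (x y m g : nat -> 'rV[R]_n) t :
  udog_run K proj O x0 reps etax etay x y m g -> K x0 -> is_euclid_proj K proj ->
  K (y t).
Proof.
case=> _ [y0 [_ [_ [_ def_y]]]] Kx0 projK.
by case: t => [|t]; rewrite ?y0 ?def_y //; exact: (proj_mem projK).
Qed.

Theorem lemma19 (R : realType) (n : nat) (K : set 'rV[R]_n)
  (proj : 'rV[R]_n -> 'rV[R]_n) (O : 'rV[R]_n -> 'rV[R]_n -> Prop)
  (x0 : 'rV[R]_n) (reps : R) (etax etay : nat -> R)
  (x y m g : nat -> 'rV[R]_n) (c : R) (t : nat) :
  closed K -> convex_set K -> K x0 -> is_euclid_proj K proj ->
  0 < reps ->
  (forall k, 0 < etax k) -> (forall k, 0 < etay k) ->
  udog_run K proj O x0 reps etax etay x y m g ->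
  0 < c ->
  etax t * (c * alpha x0 reps x y t * enorm (m t)) <= rbar x0 reps x y t ->
  etay t * (c * alpha x0 reps x y t * enorm (g t - m t)) <= rbar x0 reps x y t ->
  etay t <= etax t ->
  [/\ enorm (x t.+1 - y t) <= rbar x0 reps x y t / c,
      enorm (y t.+1 - y t) <= 2 * rbar x0 reps x y t / c,
      enorm (x t.+1 - y t.+1) <= 2 * rbar x0 reps x y t / c
    & rbar x0 reps x y t.+1 <= rbar x0 reps x y t * (1 + 2 / c)].
Proof.
move=> _ convK Kx0 projK reps_gt0 _ etay_gt0 run c_gt0 le_m le_gm le_etay.
have Kyt := udog_run_mem_y t run Kx0 projK.
have [_ [_ [_ [def_x [_ def_y]]]]] := run.
have r_gt0 := rbar_gt0 x0 x y t reps_gt0.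
have a_ge0 := alpha_ge0 x0 x y t reps_gt0.
set r := rbar x0 reps x y t in le_m le_gm r_gt0 *.
set a := alpha x0 reps x y t in le_m le_gm a_ge0 *.
have b_ge0 : 0 <= a * etay t := mulr_ge0 a_ge0 (ltW (etay_gt0 t)).
have le_ba : a * etay t <= a * etax t by rewrite ler_wpM2l.
have am_le : a * etax t * enorm (m t) <= r / c by rewrite ler_pdivlMr //; lra.
have bgm_le : a * etay t * enorm (g t - m t) <= r / c by rewrite ler_pdivlMr //; lra.
have hx : enorm (x t.+1 - y t) <= r / c.
  by rewrite def_x; exact: (extra_step_le convK projK Kyt b_ge0 le_ba am_le).
have hy : enorm (y t.+1 - y t) <= 2 * (r / c).
  by rewrite def_y; exact: (update_step_le convK projK Kyt b_ge0 le_ba am_le bgm_le).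
rewrite -!mulrA; split => //.
- rewrite def_x def_y.
  exact: (extra_update_gap_le convK projK _ b_ge0 le_ba am_le bgm_le).
- have -> : r * (1 + 2 / c) = r + 2 * (r / c) by rewrite mulrDr mulr1 mulrCA.
  by apply: rbarS_le_step => //; rewrite divr_ge0 ?ltW.
Qed.
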